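(* For all positive integers $n$ and $r$, \[ k(K_{rn}^{(r+1)};r)\leq k(n,r)\leq k(K_{rn}^{(r+1)};r)+5. \]
   Context: For a hypergraph $H=(V,E)$ (all hyperedges of size at least 2) and $r\in\mathbb N$, a colouring of the $r$-subsets of $V$ makes a hyperedge $e$ with $|e|\geq r+1$ monochromatic if all $r$-subsets of $e$ receive the same colour; $k(H;r)$ is the least $k$ for which there is a colouring of the $r$-subsets of $V$ with $k$ colours with no monochromatic hyperedge of size $\geq r+1$. $\chi(H)$ is the vertex chromatic number (least number of colours in a vertex colouring with no monochromatic hyperedge). $k(n,r)=\max\{k(H;r):\chi(H)=n\}$. $K_m^{(r+1)}$ is the complete $(r+1)$-uniform hypergraph on $m$ vertices. *)

From mathcomp Require Import all_boot.
Set Implicit Arguments. Unset Strict Implicit. Unset Printing Implicit Defensive.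

Definition is_hypergraph (V : finType) (E : {set {set V}}) : Prop :=
  forall e, e \in E -> 1 < #|e|.

Definition vmono (V : finType) k (f : {ffun V -> 'I_k}) (e : {set V}) : bool :=
  [forall x in e, forall y in e, f x == f y].

Definition vcolourable (V : finType) (E : {set {set V}}) (k : nat) : bool :=
  [exists f : {ffun V -> 'I_k}, [forall e in E, ~~ vmono f e]].

(* chi(H): least k with a proper vertex colouring. The search bound #|V|
   is always sufficient for a hypergraph (all edges of size >= 2):
   the colouring by distinct colours is proper. *)
Definition chi (V : finType) (E : {set {set V}}) : nat :=
  find (vcolourable E) (iota 0 #|V|.+1).

Definition rsub (V : finType) (r : nat) := {s : {set V} | #|s| == r}.

Definition rmono (V : finType) (r k : nat) (f : {ffun rsub V r -> 'I_k})
  (e : {set V}) : bool :=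
  [forall s : rsub V r, forall t : rsub V r,
     (val s \subset e) ==> (val t \subset e) ==> (f s == f t)].

Definition rcolourable (V : finType) (E : {set {set V}}) (r k : nat) : bool :=
  [exists f : {ffun rsub V r -> 'I_k},
     [forall e in E, (r.+1 <= #|e|) ==> ~~ rmono f e]].

(* k(H;r): least k with such a colouring of the r-subsets. The search bound
   #|{: rsub V r}| suffices when r >= 1 (distinct colours on all r-subsets). *)
Definition kcol (V : finType) (E : {set {set V}}) (r : nat) : nat :=
  find (rcolourable E r) (iota 0 #|{: rsub V r}|.+1).

Definition Kcomplete (m r : nat) : {set {set 'I_m}} :=
  [set e : {set 'I_m} | #|e| == r.+1].

(* The lower bound holds because K_{rn}^{(r+1)} itself has chromatic number
   n: colour vertex v by v / r; fewer colours would put r + 1 vertices in one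
   class, and these form a monochromatic edge.

   For the upper bound, let H have a proper vertex colouring c with n colours
   and let g colour the r-sets of K = K_{rn}^{(r+1)} with k = k(K; r) colours
   so that no (r+1)-set is monochromatic.  Identify the colours with n of the
   vertices of K and colour an r-set S of H by g(c(S)) when c is injective on
   S (S is a rainbow), and otherwise by k + tag(S), where tag takes four
   values: with the colour classes of S listed by increasing colour, tag(S)
   is the parity of the length of the initial run of singleton classes when
   that run is nonempty, and 2 + the parity of the size of the lowest class
   otherwise.  An edge e of H has two vertex colours, so it contains an
   (r+1)-set a with two colours.  If a is a rainbow, g already separates two
   r-subsets of a; otherwise a short case analysis on the lowest class of a
   (lemma [nonrainbow_separated]) yields u, v in a with a \ u, a \ v coloured
   differently.  Hence k + 4 colours suffice. *)

From mathcomp Require Import all_boot zify.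
Set Implicit Arguments. Unset Strict Implicit. Unset Printing Implicit Defensive.

Lemma least_iota_holds (P : pred nat) N : P N -> P (find P (iota 0 N.+1)).
Proof.
move=> PN; have hasPN : has P (iota 0 N.+1).
  by apply/hasP; exists N => //; rewrite mem_iota ltnSn.
have := nth_find 0 hasPN; rewrite nth_iota ?add0n //.
by move: hasPN; rewrite has_find size_iota.
Qed.

Lemma least_iota_le (P : pred nat) N k : P k -> find P (iota 0 N.+1) <= k.
Proof.
move=> Pk; have [kN|Nk] := ltnP k N.+1.
  by rewrite leqNgt; apply/negP => /(before_find 0); rewrite nth_iota // add0n Pk.
by apply: leq_trans (find_size _ _) _; rewrite size_iota.
Qed.

Lemma subset_of_card (T : finType) (A B : {set T}) k :
  B \subset A -> #|B| <= k -> k <= #|A| ->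
  exists C : {set T}, [/\ B \subset C, C \subset A & #|C| = k].
Proof.
move=> BA Bk; have [m ->] : exists m, k = #|B| + m by exists (k - #|B|); lia.
elim: m => [|m IH] kA; first by exists B; rewrite addn0.
have [C [BC CA cC]] :
    exists C : {set T}, [/\ B \subset C, C \subset A & #|C| = #|B| + m].
  by apply: IH; lia.
have : C \proper A by rewrite properEcard CA cC /=; lia.
case/properP => _ [x xA xC]; exists (x |: C); split.
- exact: subset_trans BC (subsetUr _ _).
- by rewrite subUset sub1set xA.
- by rewrite cardsU1 xC cC addnS.
Qed.

Lemma not_rmono (V : finType) r k (f : {ffun rsub V r -> 'I_k}) (e : {set V})
    (s t : rsub V r) :
  val s \subset e -> val t \subset e -> f s != f t -> ~~ rmono f e.
Proof.
move=> se te fst; apply/negP => /forallP /(_ s) /forallP /(_ t).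
by rewrite se te /= (negbTE fst).
Qed.

(* For [r >= 1], giving all r-subsets distinct colours is a good colouring:
   an edge of size [> r] contains two distinct r-subsets. *)
Lemma rcolourable_card (V : finType) (E : {set {set V}}) r : 0 < r ->
  rcolourable E r #|{: rsub V r}|.
Proof.
move=> r0; apply/existsP; exists [ffun s => enum_rank s].
apply/forall_inP => e _; apply/implyP => re.
have /card_gt1P [x [y [xe ye xy]]] : 1 < #|e| by lia.
have [S1 [xS1 S1e cS1]] :
    exists C : {set V}, [/\ [set x] \subset C, C \subset e & #|C| = r].
  by apply: subset_of_card; rewrite ?sub1set ?cards1 //; lia.
have [S2 [_ S2e cS2]] :
    exists C : {set V}, [/\ set0 \subset C, C \subset e :\ x & #|C| = r].
  apply: subset_of_card; rewrite ?sub0set ?cards0 //.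
  by move: re; rewrite (cardsD1 x e) xe; lia.
have h1 : #|S1| == r by apply/eqP.
have h2 : #|S2| == r by apply/eqP.
apply: (@not_rmono _ _ _ _ _ (Sub S1 h1) (Sub S2 h2)) => //=.
- exact: subset_trans S2e (subD1set _ _).
- rewrite !ffunE; apply/negP => /eqP /enum_rank_inj /(congr1 val) /= S12.
  by move: xS1; rewrite sub1set S12 => /(subsetP S2e); rewrite !inE eqxx.
Qed.

Lemma kcol_colourable (V : finType) (E : {set {set V}}) r : 0 < r ->
  rcolourable E r (kcol E r).
Proof. by move=> r0; apply: least_iota_holds; apply: rcolourable_card. Qed.

Lemma kcol_min (V : finType) (E : {set {set V}}) r k :
  rcolourable E r k -> kcol E r <= k.
Proof. exact: least_iota_le. Qed.

Lemma vcolourable_card (V : finType) (E : {set {set V}}) :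
  is_hypergraph E -> vcolourable E #|V|.
Proof.
move=> HE; apply/existsP; exists [ffun v => enum_rank v].
apply/forall_inP => e eE; have /card_gt1P [x [y [xe ye xy]]] := HE e eE.
apply/negP => /forall_inP /(_ x xe) /forall_inP /(_ y ye).
by rewrite !ffunE => /eqP /enum_rank_inj /eqP; rewrite (negbTE xy).
Qed.

Lemma chi_colourable (V : finType) (E : {set {set V}}) :
  is_hypergraph E -> vcolourable E (chi E).
Proof. by move=> HE; apply: least_iota_holds; apply: vcolourable_card. Qed.

Lemma chi_min (V : finType) (E : {set {set V}}) k :
  vcolourable E k -> chi E <= k.
Proof. exact: least_iota_le. Qed.

Lemma big_fibre (V : finType) k r (f : V -> 'I_k) : k * r < #|V| ->
  exists i, r < #|[set v | f v == i]|.
Proof.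
move=> big; apply/existsP; move: big; apply: contraTT => /existsPn small.
rewrite -leqNgt -sum1_card.
rewrite (partition_big f predT) //= -[k in k * r]card_ord -sum_nat_const.
apply: leq_sum => i _; rewrite sum1_card.
by have := small i; rewrite -leqNgt; apply: leq_trans; apply: subset_leq_card;
  apply/subsetP => v; rewrite !inE.
Qed.

(* The complete (r+1)-uniform hypergraph has chromatic number [n] on [r * n]
   vertices: colouring [v] by [v %/ r] leaves at most [r] vertices in each
   class, while fewer than [n] colours leave a class of size [r + 1]. *)
Lemma Kcomplete_hypergraph m r : 0 < r -> is_hypergraph (Kcomplete m r).
Proof. by move=> r0 e; rewrite inE => /eqP ->; rewrite ltnS. Qed.

Lemma Kcomplete_colourable n r : 0 < r -> vcolourable (Kcomplete (r * n) r) n.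
Proof.
move=> r0; have block (v : 'I_(r * n)) : v %/ r < n.
  by rewrite ltn_divLR // [n * r]mulnC.
apply/existsP; exists [ffun v => Ordinal (block v)].
apply/forall_inP => e; rewrite inE => /eqP ce; apply/negP => mono.
pose offset (v : 'I_(r * n)) : 'I_r := Ordinal (ltn_pmod v r0).
have offset_inj : {in e &, injective offset}.
  move=> x y xe ye /(congr1 val) /= mod_xy.
  move: mono => /forall_inP /(_ x xe) /forall_inP /(_ y ye).
  rewrite !ffunE => /eqP /(congr1 val) /= div_xy.
  by apply: val_inj; rewrite /= (divn_eq x r) (divn_eq y r) div_xy mod_xy.
by have := @leq_card_in _ _ offset (mem e) offset_inj; rewrite ce card_ord ltnn.
Qed.

Lemma Kcomplete_not_colourable n r k : 0 < r -> k < n ->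
  ~~ vcolourable (Kcomplete (r * n) r) k.
Proof.
move=> r0 kn; apply/negP => /existsP [f /forall_inP proper].
have [i big] : exists i, r < #|[set v | f v == i]|.
  by apply: big_fibre; rewrite card_ord mulnC ltn_pmul2l.
have [C [_ Ci cC]] : exists C : {set 'I_(r * n)},
    [/\ set0 \subset C, C \subset [set v | f v == i] & #|C| = r.+1].
  by apply: subset_of_card; rewrite ?sub0set ?cards0.
have := proper C; rewrite inE cC eqxx => /(_ isT) /negP; apply.
apply/forall_inP => x xC; apply/forall_inP => y yC.
by move: (subsetP Ci x xC) (subsetP Ci y yC); rewrite !inE => /eqP -> /eqP ->.
Qed.

Lemma chi_Kcomplete n r : 0 < r -> chi (Kcomplete (r * n) r) = n.
Proof.
move=> r0; apply/eqP; rewrite eqn_leq chi_min ?Kcomplete_colourable //=.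
rewrite leqNgt; apply/negP => lt_chi.
have := chi_colourable (@Kcomplete_hypergraph (r * n) r r0).
by apply/negP; apply: Kcomplete_not_colourable.
Qed.

(* The colour classes of [S],
   ordered by colour, start with a (possibly empty) run of singleton classes;
   [plen S] is the length of this run and [mincls S] the lowest class. *)
Section ColourClasses.
Variables (V : finType) (n : nat) (c : V -> 'I_n).
Implicit Types (S a : {set V}) (u v w : V).

Definition lonely S w := [forall w' in S, (c w' == c w) ==> (w' == w)].
Definition rainbow S := [forall w in S, lonely S w].
Definition in_prefix S v := [forall w in S, (c w <= c v) ==> lonely S w].
Definition plen S := #|[set v in S | in_prefix S v]|.
Definition mincls S := [set w in S | [forall w' in S, c w <= c w']].

Definition tag S : nat :=
  if plen S == 0 then 2 + odd #|mincls S| else odd (plen S).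

Lemma tag_lt4 S : tag S < 4.
Proof. by rewrite /tag; case: ifP; case: odd. Qed.

Lemma lonely_subset S a w : S \subset a -> lonely a w -> lonely S w.
Proof.
by move=> Sa /forall_inP lw; apply/forall_inP => w' /(subsetP Sa); apply: lw.
Qed.

Lemma twin_not_lonely S w w' :
  w \in S -> w' \in S -> c w' = c w -> w' != w -> ~~ lonely S w.
Proof.
move=> wS w'S cw nw; apply/negP => /forall_inP /(_ w' w'S).
by rewrite cw eqxx (negbTE nw).
Qed.

Lemma lonely_D1 S u w : c w != c u -> lonely (S :\ u) w -> lonely S w.
Proof.
move=> cwu /forall_inP lw; apply/forall_inP => w' w'S; apply/implyP => /eqP cw'.
have [w'u|w'u] := eqVneq w' u; first by move: cwu; rewrite -cw' w'u eqxx.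
by apply: (implyP (lw w' _)); rewrite ?in_setD1 ?w'u ?cw' ?eqxx.
Qed.

Lemma lonely_D1_lonely a u w : lonely a u -> w \in a -> w != u ->
  lonely (a :\ u) w -> lonely a w.
Proof.
move=> lu wa wu; apply: lonely_D1; apply: contra wu => /eqP cw.
exact: implyP (forall_inP lu w wa) (introT eqP cw).
Qed.

Lemma rainbowP S : rainbow S = (#|c @: S| == #|S|).
Proof.
apply/idP/imset_injP.
  move=> /forall_inP rS x y xS yS cxy.
  by move: (rS y yS) => /forall_inP /(_ x xS); rewrite cxy eqxx => /eqP.
move=> c_inj; apply/forall_inP => w wS; apply/forall_inP => w' w'S.
by apply/implyP => /eqP /(c_inj _ _ w'S wS) ->.
Qed.

Lemma rainbow_subset S a : S \subset a -> rainbow a -> rainbow S.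
Proof.
move=> Sa /forall_inP ra; apply/forall_inP => w wS.
exact: lonely_subset Sa (ra w (subsetP Sa w wS)).
Qed.

Lemma rainbow_D1_lonely a u : lonely a u -> rainbow (a :\ u) -> rainbow a.
Proof.
move=> lu /forall_inP ra; apply/forall_inP => w wa.
have [->//|wu] := eqVneq w u.
have wU : w \in a :\ u by rewrite in_setD1 wu wa.
exact: lonely_D1_lonely lu wa wu (ra w wU).
Qed.

Lemma minclsP S u :
  reflect (u \in S /\ forall w, w \in S -> c u <= c w) (u \in mincls S).
Proof.
rewrite inE; apply: (iffP andP) => [[uS /forall_inP umin]|[uS umin]].
  by split.
by split => //; apply/forall_inP.
Qed.

Lemma mincls_nonempty S w : w \in S -> exists u, u \in mincls S.
Proof.
move=> wS; have [u uS umin] := arg_minnP (fun v => nat_of_ord (c v)) wS.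
by exists u; apply/minclsP.
Qed.

Lemma mincls_colour S u : u \in mincls S ->
  mincls S = [set w in S | c w == c u].
Proof.
move=> /minclsP [uS umin]; apply/setP => w; rewrite [in RHS]inE.
case wS: (w \in S); last by apply/minclsP => -[]; rewrite wS.
apply/minclsP/eqP => [[_ /(_ u uS) wmin]|cw].
  by apply: val_inj; apply/eqP; rewrite eqn_leq wmin umin.
by split=> // w' /umin; rewrite cw.
Qed.

Lemma mincls_same_colour S u w :
  u \in mincls S -> w \in mincls S -> c w = c u.
Proof. by move=> uM; rewrite (mincls_colour uM) inE => /andP [_ /eqP]. Qed.

Lemma mincls_D1 a u v : u \in mincls a -> u != v ->
  mincls (a :\ v) = mincls a :\ v.
Proof.
move=> uM uv; have /minclsP [ua umin] := uM.
have uM' : u \in mincls (a :\ v).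
  by apply/minclsP; rewrite in_setD1 uv ua; split=> // w /setD1P [_ /umin].
apply/setP => w; rewrite (mincls_colour uM) (mincls_colour uM') !inE.
by rewrite andbA.
Qed.

Lemma mincls_not_rainbow S : 1 < #|mincls S| -> ~~ rainbow S.
Proof.
move=> /card_gt1P [u [w [uM wM uw]]]; apply/negP => /forall_inP rS.
have /minclsP [uS _] := uM; have /minclsP [wS _] := wM.
have wu : w != u by rewrite eq_sym.
move: (rS u uS); apply/negP.
exact: twin_not_lonely uS wS (mincls_same_colour uM wM) wu.
Qed.

Lemma lonely_mincls S u : u \in mincls S -> lonely S u = (#|mincls S| <= 1).
Proof.
move=> uM; apply/forall_inP/card_le1_eqP => [lu x y xM yM|single w wS].
  have to_u z : z \in mincls S -> z = u.
    move=> zM; have /minclsP [zS _] := zM.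
    by apply/eqP/(implyP (lu z zS)); rewrite (mincls_same_colour uM zM).
  by rewrite (to_u x xM) (to_u y yM).
apply/implyP => /eqP cw; apply/eqP; apply: single => //.
by rewrite (mincls_colour uM) inE wS cw eqxx.
Qed.

Lemma in_prefix_mono S u v :
  u \in S -> c u <= c v -> in_prefix S v -> in_prefix S u.
Proof.
move=> uS le /forall_inP pv; apply/forall_inP => w wS; apply/implyP => le'.
exact: implyP (pv w wS) (leq_trans le' le).
Qed.

Lemma in_prefix_min S u : u \in mincls S -> in_prefix S u = lonely S u.
Proof.
move=> uM; have /minclsP [uS umin] := uM.
apply/idP/idP => [/forall_inP /(_ u uS) /implyP /(_ (leqnn _))//|lu].
apply/forall_inP => w wS; apply/implyP => le.
have wM : w \in mincls S.
  by rewrite (mincls_colour uM) inE wS; apply/eqP/val_inj/eqP; rewrite eqn_leq le umin.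
have -> // : w = u.
by apply/eqP/(implyP (forall_inP lu w wS)); rewrite (mincls_same_colour uM wM).
Qed.

Lemma in_prefix_max S v :
  (forall w, w \in S -> c w <= c v) -> in_prefix S v -> rainbow S.
Proof.
move=> vmax /forall_inP pv; apply/forall_inP => w wS.
exact: implyP (pv w wS) (vmax w wS).
Qed.

Lemma plen_eq0 S u : u \in mincls S -> (plen S == 0) = (1 < #|mincls S|).
Proof.
move=> uM; have /minclsP [uS umin] := uM.
rewrite ltnNge -(lonely_mincls uM) -(in_prefix_min uM); apply/idP/idP.
  by move/eqP/card0_eq => /(_ u); rewrite !inE uS => /negbT.
move=> npu; apply/eqP/eq_card0 => v; rewrite !inE; apply/negbTE/andP => -[vS pv].
by move/negP: npu; apply; apply: in_prefix_mono uS (umin v vS) pv.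
Qed.

Lemma tag_big S : 1 < #|mincls S| -> tag S = 2 + odd #|mincls S|.
Proof.
move=> big; have /card_gt0P [u uM] : 0 < #|mincls S| by apply: ltnW.
by rewrite /tag (plen_eq0 uM) big.
Qed.

Lemma tag_prefix S : 0 < plen S -> tag S = odd (plen S).
Proof. by rewrite /tag lt0n => /negbTE ->. Qed.

Lemma in_prefix_D1_lonely a u w : lonely a u -> w \in a :\ u ->
  in_prefix (a :\ u) w = in_prefix a w.
Proof.
move=> lu /setD1P [_ wa]; apply/idP/idP => /forall_inP pw;
  apply/forall_inP => w1 w1a; apply/implyP => le.
- have [->//|w1u] := eqVneq w1 u.
  have w1U : w1 \in a :\ u by rewrite in_setD1 w1u w1a.
  exact: lonely_D1_lonely lu w1a w1u (implyP (pw w1 w1U) le).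
- have /setD1P [_ w1a'] := w1a.
  exact: lonely_subset (subD1set a u) (implyP (pw w1 w1a') le).
Qed.

Lemma plen_D1_lonely a u : u \in a -> lonely a u ->
  plen a = in_prefix a u + plen (a :\ u).
Proof.
move=> ua lu; rewrite /plen (cardsD1 u [set v in a | in_prefix a v]) inE ua.
congr (_ + _); apply: eq_card => w; rewrite !inE.
have [//|wu] := eqVneq w u; case wa: (w \in a) => //=.
by rewrite in_prefix_D1_lonely // in_setD1 wu wa.
Qed.

Lemma in_prefix_D1_max a v w : (forall w, w \in a -> c w <= c v) ->
  ~~ rainbow (a :\ v) -> w \in a :\ v -> in_prefix (a :\ v) w = in_prefix a w.
Proof.
move=> vmax nrb /setD1P [_ wa]; apply/idP/idP => /forall_inP pw;
  apply/forall_inP => w1 w1a; apply/implyP => le.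
- have cwv : c w < c v.
    rewrite ltn_neqAle vmax // andbT; apply: contraNneq nrb => cw.
    apply/forall_inP => w2 w2U; apply: (implyP (pw w2 w2U)).
    by rewrite cw vmax //; have /setD1P [] := w2U.
  have cw1v : c w1 != c v.
    by apply: contraTneq cwv => <-; rewrite -leqNgt.
  have w1U : w1 \in a :\ v.
    by rewrite in_setD1 w1a andbT; apply: contraNneq cw1v => ->.
  exact: lonely_D1 cw1v (implyP (pw w1 w1U) le).
- have /setD1P [_ w1a'] := w1a.
  exact: lonely_subset (subD1set a v) (implyP (pw w1 w1a') le).
Qed.

Lemma plen_D1_max a v : (forall w, w \in a -> c w <= c v) ->
  ~~ in_prefix a v -> ~~ rainbow (a :\ v) -> plen (a :\ v) = plen a.
Proof.
move=> vmax npv nrb; apply: eq_card => w; rewrite !inE.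
have [->|wv] := eqVneq w v; first by rewrite /= (negbTE npv) andbF.
case wa: (w \in a) => //=.
by rewrite in_prefix_D1_max // in_setD1 wv wa.
Qed.

(* [S] and [T] are [separated] when the colouring of r-sets defined below
   tells them apart: exactly one is a rainbow, or neither is and their tags
   differ. *)
Definition separated S T :=
  (rainbow S != rainbow T) || [&& ~~ rainbow S, ~~ rainbow T & tag S != tag T].

(* Lowest class a single vertex [u]: [a :\ u] has a run one shorter than [a],
   while removing a vertex [v] of maximal colour either leaves a rainbow or
   keeps the run of [a]. *)
Lemma separated_lonely_min a u : u \in mincls a -> lonely a u -> ~~ rainbow a ->
  exists2 v, v \in a & separated (a :\ u) (a :\ v).
Proof.
move=> uM lu nra; have /minclsP [ua _] := uM.
have nrU : ~~ rainbow (a :\ u) by apply: contra nra; apply: rainbow_D1_lonely.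
have [v va vmax] := arg_maxnP (fun w => nat_of_ord (c w)) ua.
have npv : ~~ in_prefix a v by apply: contra nra; apply: in_prefix_max.
exists v => //; rewrite /separated (negbTE nrU) /=.
have [//|nrV] := boolP (rainbow (a :\ v)); rewrite /=.
have plenU : plen a = (plen (a :\ u)).+1.
  by rewrite (plen_D1_lonely ua lu) in_prefix_min ?lu.
rewrite (tag_prefix (S := a :\ v)) (plen_D1_max vmax npv nrV) ?plenU //.
rewrite oddS /tag; case: ifP => _; last by case: odd.
by case: odd; case: odd.
Qed.

(* Lowest class with at least two vertices: removing a vertex [v] outside it
   keeps it, removing [u] from it shrinks it by one; the tags, or the
   rainbow status, then differ. *)
Lemma separated_twin_min a u v : u \in mincls a -> 1 < #|mincls a| ->
  v \in a -> v \notin mincls a -> separated (a :\ u) (a :\ v).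
Proof.
move=> uM big va vM.
have uv : u != v by apply: contraNneq vM => <-.
have cardV : #|mincls (a :\ v)| = #|mincls a|.
  by rewrite (mincls_D1 uM uv) [RHS](cardsD1 v) (negbTE vM).
have nrV : ~~ rainbow (a :\ v) by apply: mincls_not_rainbow; rewrite cardV.
have tagV : tag (a :\ v) = 2 + odd #|mincls a| by rewrite tag_big cardV.
have [u' [u'M u'u]] : exists u', u' \in mincls a /\ u' != u.
  have /card_gt1P [x [y [xM yM xy]]] := big.
  by have [xu|xu] := eqVneq x u; [exists y; rewrite -xu eq_sym | exists x].
have cardU : #|mincls a| = #|mincls (a :\ u)|.+1.
  by rewrite (mincls_D1 u'M u'u) (cardsD1 u (mincls a)) uM.
have u'U : u' \in mincls (a :\ u) by rewrite (mincls_D1 u'M u'u) in_setD1 u'u.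
rewrite /separated (negbTE nrV) /=; have [//|nrU] := boolP (rainbow (a :\ u)).
rewrite /= tagV; have [bigU|smallU] := ltnP 1 #|mincls (a :\ u)|.
  by rewrite tag_big // cardU oddS eqn_add2l; case: odd.
have plenU : 0 < plen (a :\ u) by rewrite lt0n (plen_eq0 u'U) -leqNgt.
by rewrite tag_prefix //; case: odd; case: odd.
Qed.

Lemma exists_outside_mincls a x y : x \in a -> y \in a -> c x != c y ->
  exists2 v, v \in a & v \notin mincls a.
Proof.
move=> xa ya cxy; have [xM|] := boolP (x \in mincls a); last by exists x.
exists y => //; apply: contra cxy => yM.
by rewrite (mincls_same_colour xM yM).
Qed.

Lemma nonrainbow_separated a x y : x \in a -> y \in a -> c x != c y ->
  ~~ rainbow a -> exists u v, [/\ u \in a, v \in a & separated (a :\ u) (a :\ v)].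
Proof.
move=> xa ya cxy nra; have [u uM] := mincls_nonempty xa.
have /minclsP [ua _] := uM.
have [single|big] := leqP #|mincls a| 1.
  have lu : lonely a u by rewrite lonely_mincls.
  by have [v va sep] := separated_lonely_min uM lu nra; exists u, v.
have [v va vM] := exists_outside_mincls xa ya cxy.
by exists u, v; split=> //; apply: separated_twin_min.
Qed.

End ColourClasses.

(* Given a vertex colouring [c] with [n]
   colours, an injection [emb] of the colours into the vertex set ['I_m], and
   a colouring [g] of the r-sets of ['I_m] with [p] colours leaving no
   (r+1)-set monochromatic, colour a rainbow r-set [S] by [g] of its colour
   set and any other r-set by [p + tag c S]. *)
Section LiftedColouring.
Variables (V : finType) (n m r p : nat) (c : V -> 'I_n).
Variables (emb : 'I_n -> 'I_m) (g : {ffun rsub 'I_m r -> 'I_p}).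
Hypothesis emb_inj : injective emb.
Hypothesis g_good : forall e : {set 'I_m}, #|e| = r.+1 -> ~~ rmono g e.
Hypothesis r_pos : 0 < r.
Implicit Types (S T a e : {set V}).

Definition lift_colour S : nat :=
  if (insub (emb @: (c @: S)) : option (rsub 'I_m r)) is Some s
  then nat_of_ord (g s) else p + tag c S.

Lemma lift_colour_lt S : lift_colour S < p + 4.
Proof.
rewrite /lift_colour; case: insub => [s|]; last by rewrite ltn_add2l tag_lt4.
exact: leq_trans (ltn_ord _) (leq_addr _ _).
Qed.

Definition lifted : {ffun rsub V r -> 'I_(p + 4)} :=
  [ffun s => Ordinal (lift_colour_lt (val s))].

Lemma colour_set_card S : #|S| = r -> (#|emb @: (c @: S)| == r) = rainbow c S.
Proof. by move=> cS; rewrite card_imset // -cS rainbowP. Qed.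

Lemma lift_colour_rainbow S : #|S| = r -> rainbow c S -> lift_colour S < p.
Proof.
move=> cS rS; rewrite /lift_colour; case: insubP => [s _ _|]; first exact: ltn_ord.
by rewrite colour_set_card ?rS.
Qed.

Lemma lift_colour_nonrainbow S : #|S| = r -> ~~ rainbow c S ->
  lift_colour S = p + tag c S.
Proof.
by move=> cS nrS; rewrite /lift_colour insubF // colour_set_card // (negbTE nrS).
Qed.

Lemma lift_colour_separated S T : #|S| = r -> #|T| = r ->
  separated c S T -> lift_colour S != lift_colour T.
Proof.
move=> cS cT /orP [|/and3P [nrS nrT tagST]]; last first.
  by rewrite !lift_colour_nonrainbow // eqn_add2l.
have [rS|nrS] := boolP (rainbow c S); have [rT|nrT] := boolP (rainbow c T) => // _.
  have := lift_colour_rainbow cS rS; rewrite (lift_colour_nonrainbow cT nrT).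
  by apply: contraTneq => ->; rewrite -leqNgt leq_addr.
have := lift_colour_rainbow cT rT; rewrite (lift_colour_nonrainbow cS nrS).
by apply: contraTneq => <-; rewrite -leqNgt leq_addr.
Qed.

Lemma lift_colour_preimage a (s : rsub 'I_m r) : rainbow c a ->
  val s \subset emb @: (c @: a) ->
  exists S : rsub V r, val S \subset a /\ lift_colour (val S) = g s.
Proof.
move=> ra sa; pose S := [set w in a | emb (c w) \in val s].
have Sa : S \subset a by apply/subsetP => w; rewrite inE => /andP [].
have colS : emb @: (c @: S) = val s.
  rewrite -imset_comp; apply/setP => z; apply/imsetP/idP.
    by move=> [w]; rewrite inE => /andP [_ wz] ->.
  move=> zs; have := subsetP sa z zs; rewrite -imset_comp => /imsetP [w wa zw].
  by exists w; rewrite // inE wa; move: zs; rewrite zw.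
have cS : #|S| == r.
  rewrite -(eqP (etrans (esym (rainbowP c S)) (rainbow_subset Sa ra))).
  by rewrite -(card_imset _ emb_inj) colS; apply: (svalP s).
by exists (Sub S cS); split => //=; rewrite /lift_colour colS valK.
Qed.

(* An edge containing a rainbow (r+1)-set [a] is not monochromatic: [g]
   separates two r-subsets of the colour set of [a]. *)
Lemma rainbow_not_mono e a : a \subset e -> rainbow c a ->
  #|a| = r.+1 -> ~~ rmono lifted e.
Proof.
move=> ae ra ca.
have ccol : #|emb @: (c @: a)| = r.+1.
  by rewrite card_imset // (eqP (etrans (esym (rainbowP c a)) ra)).
move: (g_good ccol) => /forallPn [s /forallPn [t]].
rewrite !negb_imply => /and3P [sa ta gst].
have [S [Sa colS]] := lift_colour_preimage ra sa.
have [T [Ta colT]] := lift_colour_preimage ra ta.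
apply: (not_rmono (subset_trans Sa ae) (subset_trans Ta ae)).
rewrite !ffunE; apply: contra gst => /eqP /(congr1 val) /=.
by rewrite colS colT => /val_inj ->.
Qed.

Lemma nonrainbow_not_mono e a x y : a \subset e -> #|a| = r.+1 ->
  x \in a -> y \in a -> c x != c y -> ~~ rainbow c a -> ~~ rmono lifted e.
Proof.
move=> ae ca xa ya cxy nra.
have [u [v [ua va sep]]] := nonrainbow_separated xa ya cxy nra.
have cD1 z : z \in a -> #|a :\ z| == r.
  by move=> za; move: ca; rewrite (cardsD1 z) za add1n => -[->].
have sub z : a :\ z \subset e := subset_trans (subD1set a z) ae.
pose U : rsub V r := Sub (a :\ u) (cD1 u ua).
pose W : rsub V r := Sub (a :\ v) (cD1 v va).
apply: (@not_rmono _ _ _ _ _ U W (sub u) (sub v)).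
rewrite !ffunE; apply/negP => /eqP /(congr1 val) /= /eqP; apply/negP.
by apply: lift_colour_separated sep; apply/eqP/cD1.
Qed.

Lemma lifted_good e x y : x \in e -> y \in e -> c x != c y ->
  r.+1 <= #|e| -> ~~ rmono lifted e.
Proof.
move=> xe ye cxy re; have xy : x != y by apply: contraNneq cxy => ->.
have [a [xya ae ca]] :
    exists a : {set V}, [/\ [set x; y] \subset a, a \subset e & #|a| = r.+1].
  by apply: subset_of_card => //; rewrite ?subUset ?sub1set ?xe ?ye // cards2 xy.
have [ra|nra] := boolP (rainbow c a); first exact: rainbow_not_mono ra ca.
have xa : x \in a by apply: (subsetP xya); rewrite !inE eqxx.
have ya : y \in a by apply: (subsetP xya); rewrite !inE eqxx orbT.
exact: nonrainbow_not_mono ae ca xa ya cxy nra.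
Qed.

End LiftedColouring.

Theorem theorem4p2 (n r : nat) : 0 < n -> 0 < r ->
  (* k(K_{rn}^{(r+1)}; r) <= k(n,r) *)
  (exists (V : finType) (E : {set {set V}}),
      [/\ is_hypergraph E, chi E = n & kcol (Kcomplete (r * n) r) r <= kcol E r])
  /\
  (* k(n,r) <= k(K_{rn}^{(r+1)}; r) + 5 *)
  (forall (V : finType) (E : {set {set V}}),
      is_hypergraph E -> chi E = n ->
      kcol E r <= kcol (Kcomplete (r * n) r) r + 5).
Proof.
move=> _ r0; split.
  exists 'I_(r * n), (Kcomplete (r * n) r).
  by split=> //; [exact: Kcomplete_hypergraph | exact: chi_Kcomplete].
move=> V E HE chiE; set K := Kcomplete (r * n) r.
have /existsP [f /forall_inP f_good] : vcolourable E n.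
  by rewrite -chiE; apply: chi_colourable.
have /existsP [g /forall_inP g_good] := kcol_colourable K r0.
have g_good' (e : {set 'I_(r * n)}) : #|e| = r.+1 -> ~~ rmono g e.
  by move=> ce; have := g_good e; rewrite inE ce eqxx leqnn; apply.
have emb_inj : injective (widen_ord (leq_pmull n r0)).
  by move=> i j /(congr1 val) /= /val_inj.
have lifted_ok : rcolourable E r (kcol K r + 4).
  apply/existsP; exists (lifted f (widen_ord (leq_pmull n r0)) g).
  apply/forall_inP => e eE; apply/implyP => re.
  have /forall_inPn [x xe /forall_inPn [y ye cxy]] := f_good e eE.
  exact: (lifted_good (c := f) emb_inj g_good' r0 xe ye cxy re).
by apply: leq_trans (kcol_min lifted_ok) _; rewrite leq_add2l.
Qed.
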